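(* Let $\mathcal{C}$ be the Cesàro operator $\mathcal{C}(x)=\big(\frac1n\sum_{i=1}^n x_i\big)_n$. Fix $1\le p<\infty$ and $1<q,r<\infty$, and let $T\colon\ell^p\to\ell^q$ be a nontrivial continuous linear operator with matrix $a_{ij}=T(e^j)_i$. Let $h=(h_j)\in\ell^{s_{pr}}$, and write $s=s_{rq}$ and $s'$ for its conjugate exponent. The following are equivalent: (a) There exists $g\in\ell^{s}$ such that $T(x)=g\,\mathcal{C}(hx)$ for all $x\in\ell^p$ (here $\mathcal{C}\colon\ell^r\to\ell^r$). (b) There exists $g=(g_i)\in\ell^{s}$ such that $a_{ij}=g_ih_j/i$ if $j\le i$ and $a_{ij}=0$ if $j>i$. (c) There exists $C>0$ such that $$\sum_{i=1}^n\sum_{j=1}^m r_{ij}a_{ij}\le C\Big(\sum_{i=1}^n\frac{1}{i^{s'}}\Big|\sum_{j=1}^{\min\{i,m\}}h_jr_{ij}\Big|^{s'}\Big)^{1/s'}$$ for all $n,m\in\mathbb{N}$ and all real $(r_{ij})$ with $|r_{ij}|\le1$. Moreover, if $r\le q$, then (a)–(c) are equivalent to: (d) There exists $C>0$ such that $\sum_{j=1}^m r_ja_{nj}\le C\frac1n\big|\sum_{j=1}^{\min\{n,m\}}h_jr_j\big|$ for all $n,m\in\mathbb{N}$ and all real $(r_j)$ with $|r_j|\le1$.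
   Context: $(e^n)$ denotes the standard unit vectors. For exponents $1\le a,b\le\infty$, $s_{ab}=\frac{ab}{a-b}$ if $1\le b<a<\infty$; $s_{ab}=b$ if $1\le b<a=\infty$; $s_{ab}=\infty$ if $1\le a\le b\le\infty$. Products of sequences are coordinatewise. $\mathcal{C}$ is bounded on $\ell^r$ for $1<r<\infty$. *)

From Stdlib Require Import Reals Lra.
From Coquelicot Require Import Coquelicot.
Open Scope R_scope.

(* Convention: sequences are nat -> R, index k stands for the paper's index k+1. *)

(* x^y for x >= 0, y > 0, with 0^y = 0 (Stdlib's Rpower 0 y = 1). *)
Definition pw (x y : R) : R := if Req_EM_T x 0 then 0 else Rpower x y.

Fixpoint sumto (n : nat) (f : nat -> R) : R :=
  match n with O => 0 | S k => sumto k f + f k end.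

Definition in_lp (p : Rbar) (x : nat -> R) : Prop :=
  match p with
  | Finite p0 => ex_series (fun n => pw (Rabs (x n)) p0)
  | p_infty => exists M, forall n, Rabs (x n) <= M
  | m_infty => False
  end.

Definition lp_norm (p : R) (x : nat -> R) : R :=
  pw (Series (fun n => pw (Rabs (x n)) p)) (1 / p).

Definition s_exp (a b : R) : Rbar :=
  if Rlt_dec b a then Finite (a * b / (a - b)) else p_infty.

Definition conj_exp (s : Rbar) : R :=
  match s with
  | Finite s0 => s0 / (s0 - 1)
  | _ => 1
  end.

Definition unitv (j : nat) : nat -> R := fun k => if Nat.eqb k j then 1 else 0.

Definition cesaro (x : nat -> R) : nat -> R :=
  fun n => sumto (S n) x / INR (S n).

Definition bounded_linear_op (p q : R) (T : (nat -> R) -> (nat -> R)) : Prop :=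
  (forall x, in_lp (Finite p) x -> in_lp (Finite q) (T x)) /\
  (forall x y, in_lp (Finite p) x -> in_lp (Finite p) y ->
     forall n, T (fun k => x k + y k) n = T x n + T y n) /\
  (forall c x, in_lp (Finite p) x -> forall n, T (fun k => c * x k) n = c * T x n) /\
  (exists M, forall x, in_lp (Finite p) x -> lp_norm q (T x) <= M * lp_norm p x).

Definition nontrivial_op (p : R) (T : (nat -> R) -> (nat -> R)) : Prop :=
  exists x, in_lp (Finite p) x /\ exists n, T x n <> 0.

(* Testing T on unit vectors shows that (a) gives the matrix form (b). Conversely, under (b)
   the operators T and x |-> g C(hx) agree on finitely supported vectors, and boundedness of T
   together with the vanishing of l^p tails extends this to all of l^p.

   Under (b) the left side of (c) is sum_i g_i y_i with y_i = (1/i) sum_(j <= min(i,m)) h_j r_ij,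
   while the right side is C ||y||_s', so (b) => (c) is Hölder's inequality; for s = oo it
   holds row by row, which is (d). Both sides of (c) are homogeneous in r, so (c) holds for
   unbounded r too. Tested on a single row i, it says that row i of the matrix vanishes on
   every vector orthogonal to (h_1, ..., h_i), hence is a multiple g_i/i of h; testing with a
   multiple of h gives |g_i| <= C, and testing with the extremal vector of Hölder's inequality
   gives ||g||_s <= C. When r <= q we have s = oo and s' = 1, and (c) is the sum over the rows
   of (d). *)

From Stdlib Require Import Reals Lra Lia FunctionalExtensionality.
From Coquelicot Require Import Coquelicot.
Open Scope R_scope.

Lemma sumto_ext n f g : (forall k, (k < n)%nat -> f k = g k) -> sumto n f = sumto n g.
Proof.
  induction n as [|n IH]; intros Hfg; simpl; [reflexivity|].
  rewrite IH, Hfg; auto with arith.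
Qed.

Lemma sumto_plus n f g : sumto n (fun k => f k + g k) = sumto n f + sumto n g.
Proof. induction n as [|n IH]; simpl; [ring|]. rewrite IH; ring. Qed.

Lemma sumto_scal n c f : sumto n (fun k => c * f k) = c * sumto n f.
Proof. induction n as [|n IH]; simpl; [ring|]. rewrite IH; ring. Qed.

Lemma sumto_eq0 n f : (forall k, (k < n)%nat -> f k = 0) -> sumto n f = 0.
Proof.
  induction n as [|n IH]; intros Hf; simpl; [reflexivity|].
  rewrite IH, Hf; [ring | lia | intros k Hk; apply Hf; lia].
Qed.

Lemma sumto_le n f g : (forall k, (k < n)%nat -> f k <= g k) -> sumto n f <= sumto n g.
Proof.
  induction n as [|n IH]; intros Hfg; simpl; [lra|].
  apply Rplus_le_compat; auto with arith.
Qed.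

Lemma sumto_ge0 n f : (forall k, (k < n)%nat -> 0 <= f k) -> 0 <= sumto n f.
Proof. intros Hf. rewrite <- (sumto_eq0 n (fun _ => 0)) by auto. now apply sumto_le. Qed.

Lemma sumto_term_le n f i :
  (forall k, (k < n)%nat -> 0 <= f k) -> (i < n)%nat -> f i <= sumto n f.
Proof.
  induction n as [|n IH]; intros Hf Hi; simpl; [lia|].
  assert (0 <= sumto n f) by (apply sumto_ge0; auto with arith).
  destruct (Nat.eq_dec i n) as [->|Hne]; [lra|].
  assert (f i <= sumto n f) by (apply IH; auto with arith; lia).
  assert (0 <= f n) by auto with arith.
  lra.
Qed.

Lemma sumto_ge0_eq0 n f :
  (forall k, (k < n)%nat -> 0 <= f k) -> sumto n f = 0 -> forall k, (k < n)%nat -> f k = 0.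
Proof.
  intros Hf Hsum k Hk. pose proof (sumto_term_le n f k Hf Hk). pose proof (Hf k Hk). lra.
Qed.

Lemma sumto_only n f i :
  (forall k, (k < n)%nat -> k <> i -> f k = 0) -> (i < n)%nat -> sumto n f = f i.
Proof.
  induction n as [|n IH]; intros Hf Hi; simpl; [lia|].
  destruct (Nat.eq_dec i n) as [->|Hne].
  - rewrite sumto_eq0; [ring|]. intros k Hk; apply Hf; lia.
  - rewrite IH, (Hf n); [ring | lia | lia | | lia].
    intros k Hk Hki; apply Hf; lia.
Qed.

Lemma sumto_unitv n j f :
  sumto n (fun k => f k * unitv j k) = if Nat.ltb j n then f j else 0.
Proof.
  destruct (Nat.ltb_spec j n) as [Hj|Hj].
  - rewrite (sumto_only n _ j); unfold unitv.
    + now rewrite Nat.eqb_refl, Rmult_1_r.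
    + intros k _ Hk. apply Nat.eqb_neq in Hk. rewrite Hk; ring.
    + exact Hj.
  - apply sumto_eq0; intros k Hk; unfold unitv.
    replace (Nat.eqb k j) with false by (symmetry; apply Nat.eqb_neq; lia). ring.
Qed.

Lemma sumto_lower_triangular m i f :
  sumto m (fun j => if Nat.leb j i then f j else 0) = sumto (Nat.min (S i) m) f.
Proof.
  induction m as [|m IH]; [now rewrite Nat.min_0_r|].
  simpl sumto at 1. rewrite IH. destruct (Nat.leb_spec m i).
  - replace (Nat.min (S i) (S m)) with (S m) by lia.
    replace (Nat.min (S i) m) with m by lia. reflexivity.
  - replace (Nat.min (S i) (S m)) with (Nat.min (S i) m) by lia. ring.
Qed.

Lemma sumto_sum_f_R0 n f : sumto (S n) f = sum_f_R0 f n.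
Proof. induction n as [|n IH]; simpl in *; [ring|]. now rewrite <- IH. Qed.

Lemma INR_S_gt0 i : 0 < INR (S i).
Proof. apply lt_0_INR; lia. Qed.

Lemma pw_0 a : pw 0 a = 0.
Proof. unfold pw. destruct (Req_EM_T 0 0); [reflexivity | lra]. Qed.

Lemma pw_pos x a : 0 < x -> pw x a = Rpower x a.
Proof. intros Hx. unfold pw. destruct (Req_EM_T x 0); [lra | reflexivity]. Qed.

Lemma pw_ge0 x a : 0 <= pw x a.
Proof. unfold pw. destruct (Req_EM_T x 0); [lra | left; apply exp_pos]. Qed.

Lemma pw_gt0 x a : 0 < x -> 0 < pw x a.
Proof. intros Hx. rewrite pw_pos by exact Hx. apply exp_pos. Qed.

Lemma pw_1 x : 0 <= x -> pw x 1 = x.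
Proof.
  intros Hx. destruct (Req_EM_T x 0) as [->|Hne]; [apply pw_0|].
  rewrite pw_pos by lra. apply Rpower_1; lra.
Qed.

Lemma pw_plus x a b : pw x (a + b) = pw x a * pw x b.
Proof. unfold pw. destruct (Req_EM_T x 0); [ring | apply Rpower_plus]. Qed.

Lemma pw_pw x a b : 0 <= x -> pw (pw x a) b = pw x (a * b).
Proof.
  intros Hx. destruct (Req_EM_T x 0) as [->|Hne]; [now rewrite !pw_0|].
  rewrite (pw_pos x a), pw_pos, pw_pos by (try apply exp_pos; lra).
  apply Rpower_mult.
Qed.

Lemma pw_pw_inv x a : 0 <= x -> a <> 0 -> pw (pw x a) (1 / a) = x.
Proof.
  intros Hx Ha. rewrite pw_pw by exact Hx.
  replace (a * (1 / a)) with 1 by (field; exact Ha). now apply pw_1.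
Qed.

Lemma pw_mult x y a : 0 <= x -> 0 <= y -> pw (x * y) a = pw x a * pw y a.
Proof.
  intros Hx Hy.
  destruct (Req_EM_T x 0) as [->|Hx0]; [rewrite Rmult_0_l, !pw_0; ring|].
  destruct (Req_EM_T y 0) as [->|Hy0]; [rewrite Rmult_0_r, !pw_0; ring|].
  rewrite !pw_pos by nra. symmetry; apply Rpower_mult_distr; lra.
Qed.

Lemma pw_inv x a : 0 < x -> pw (/ x) a = / pw x a.
Proof.
  intros Hx. rewrite !pw_pos by (try apply Rinv_0_lt_compat; exact Hx).
  unfold Rpower. rewrite ln_Rinv, <- exp_Ropp by exact Hx. f_equal; ring.
Qed.

Lemma pw_div x y a : 0 < x -> 0 <= y -> / pw x a * pw y a = pw (y / x) a.
Proof.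
  intros Hx Hy. unfold Rdiv.
  rewrite pw_mult, pw_inv by (auto; left; now apply Rinv_0_lt_compat). ring.
Qed.

Lemma pw_lt x y a : 0 < a -> 0 <= x < y -> pw x a < pw y a.
Proof.
  intros Ha Hxy. destruct (Req_EM_T x 0) as [->|Hx0].
  - rewrite pw_0. apply pw_gt0; lra.
  - rewrite !pw_pos by lra. apply Rlt_Rpower_l; lra.
Qed.

Lemma pw_le x y a : 0 < a -> 0 <= x <= y -> pw x a <= pw y a.
Proof.
  intros Ha Hxy. destruct (Req_EM_T x y) as [->|Hne]; [lra|].
  left; apply pw_lt; lra.
Qed.

(** * Hölder's inequality and its converse *)

(* Weighted AM-GM from [exp t >= 1 + t] at the weighted geometric mean [exp L]. *)
Lemma young u v al be : 0 < al -> 0 < be -> al + be = 1 -> 0 <= u -> 0 <= v ->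
  pw u al * pw v be <= al * u + be * v.
Proof.
  intros Hal Hbe Hsum Hu Hv.
  destruct (Req_EM_T u 0) as [->|Hu0]; [rewrite pw_0; nra|].
  destruct (Req_EM_T v 0) as [->|Hv0]; [rewrite pw_0; nra|].
  rewrite !pw_pos by lra. unfold Rpower. rewrite <- exp_plus.
  set (L := al * ln u + be * ln v).
  assert (Hexp : forall w, 0 < w -> exp L * (1 + (ln w - L)) <= w).
  { intros w Hw. rewrite <- (exp_ln w) at 2 by exact Hw.
    replace (ln w) with (L + (ln w - L)) at 2 by ring. rewrite exp_plus.
    apply Rmult_le_compat_l; [left; apply exp_pos | apply exp_ineq1_le]. }
  assert (Hu' := Hexp u ltac:(lra)). assert (Hv' := Hexp v ltac:(lra)).
  assert (Hcomb : al * (1 + (ln u - L)) + be * (1 + (ln v - L)) = 1)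
    by (unfold L; replace be with (1 - al) by lra; ring).
  replace (exp L) with (al * (exp L * (1 + (ln u - L))) + be * (exp L * (1 + (ln v - L))))
    by (transitivity (exp L * (al * (1 + (ln u - L)) + be * (1 + (ln v - L))));
        [ring | rewrite Hcomb; ring]).
  apply Rplus_le_compat; apply Rmult_le_compat_l; lra.
Qed.

Lemma holder_pw n u v al be : 0 < al -> 0 < be -> al + be = 1 ->
  (forall k, 0 <= u k) -> (forall k, 0 <= v k) ->
  sumto n (fun k => pw (u k) al * pw (v k) be) <= pw (sumto n u) al * pw (sumto n v) be.
Proof.
  intros Hal Hbe Hsum Hu Hv.
  set (U := sumto n u). set (V := sumto n v).
  assert (HU : 0 <= U) by (apply sumto_ge0; auto).
  assert (HV : 0 <= V) by (apply sumto_ge0; auto).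
  destruct (Req_EM_T U 0) as [HU0|HU0].
  { rewrite sumto_eq0; [rewrite HU0, pw_0; lra|].
    intros k Hk. rewrite (sumto_ge0_eq0 n u (fun k _ => Hu k) HU0 k Hk), pw_0; ring. }
  destruct (Req_EM_T V 0) as [HV0|HV0].
  { rewrite sumto_eq0; [rewrite HV0, pw_0; lra|].
    intros k Hk. rewrite (sumto_ge0_eq0 n v (fun k _ => Hv k) HV0 k Hk), pw_0; ring. }
  (* Young's inequality applied to the normalized terms [u k / U] and [v k / V]. *)
  apply Rle_trans with (sumto n (fun k => pw U al * pw V be * (al * (u k / U) + be * (v k / V)))).
  - apply sumto_le; intros k _.
    assert (Huk : 0 <= u k / U) by (apply Rdiv_le_0_compat; auto; lra).
    assert (Hvk : 0 <= v k / V) by (apply Rdiv_le_0_compat; auto; lra).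
    replace (u k) with (U * (u k / U)) at 1 by (field; lra).
    replace (v k) with (V * (v k / V)) at 1 by (field; lra).
    rewrite !pw_mult by lra.
    replace (pw U al * pw (u k / U) al * (pw V be * pw (v k / V) be))
      with (pw U al * pw V be * (pw (u k / U) al * pw (v k / V) be)) by ring.
    apply Rmult_le_compat_l; [apply Rmult_le_pos; apply pw_ge0 | now apply young].
  - rewrite sumto_scal, sumto_plus.
    rewrite (sumto_ext n (fun k => al * (u k / U)) (fun k => al / U * u k)),
            (sumto_ext n (fun k => be * (v k / V)) (fun k => be / V * v k)),
            !sumto_scal by (intros; field; lra).
    fold U V. right. replace (al / U * U + be / V * V) with (al + be) by (field; lra).
    rewrite Hsum; ring.
Qed.

Lemma sumto_holder n g y s : 1 < s ->
  sumto n (fun i => g i * y i)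
  <= pw (sumto n (fun i => pw (Rabs (g i)) s)) (1 / s)
     * pw (sumto n (fun i => pw (Rabs (y i)) (s / (s - 1)))) (1 / (s / (s - 1))).
Proof.
  intros Hs. set (s' := s / (s - 1)).
  assert (Hs' : 0 < s') by (apply Rdiv_lt_0_compat; lra).
  apply Rle_trans with
    (sumto n (fun i => pw (pw (Rabs (g i)) s) (1 / s) * pw (pw (Rabs (y i)) s') (1 / s'))).
  - apply sumto_le; intros i _.
    rewrite !pw_pw_inv by (try apply Rabs_pos; lra).
    rewrite <- Rabs_mult. apply Rle_abs.
  - apply holder_pw; try (intros; apply pw_ge0); try (apply Rdiv_lt_0_compat; lra).
    unfold s'; field; lra.
Qed.

Lemma pw_abs_extremal x s : 1 < s ->
  x * (x * pw (Rabs x) (s - 2)) = pw (Rabs x) s /\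
  pw (Rabs (x * pw (Rabs x) (s - 2))) (s / (s - 1)) = pw (Rabs x) s.
Proof.
  intros Hs. assert (HA := Rabs_pos x).
  assert (Hsucc : forall b, Rabs x * pw (Rabs x) b = pw (Rabs x) (1 + b))
    by (intros b; now rewrite pw_plus, pw_1).
  split.
  - replace s with (1 + (1 + (s - 2))) at 2 by ring.
    rewrite <- !Hsucc, <- !Rmult_assoc, <- Rabs_mult, (Rabs_pos_eq (x * x)); [reflexivity|].
    apply Rle_0_sqr.
  - rewrite Rabs_mult, (Rabs_pos_eq (pw _ _)), Hsucc, pw_pw by (try apply pw_ge0; lra).
    f_equal. field. lra.
Qed.

(* The extremal test vector for Hölder's inequality is [y i = g i * |g i|^(s-2)]. *)
Lemma sumto_pw_le_of_dual n g s C : 1 < s ->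
  (forall y, (forall i, g i = 0 -> y i = 0) ->
     sumto n (fun i => g i * y i)
     <= C * pw (sumto n (fun i => pw (Rabs (y i)) (s / (s - 1)))) (1 / (s / (s - 1)))) ->
  sumto n (fun i => pw (Rabs (g i)) s) <= pw C s.
Proof.
  intros Hs Hdual. set (Sg := sumto n (fun i => pw (Rabs (g i)) s)).
  assert (HSg : 0 <= Sg) by (apply sumto_ge0; intros; apply pw_ge0).
  assert (Hself : Sg <= C * pw Sg (1 / (s / (s - 1)))).
  { specialize (Hdual (fun i => g i * pw (Rabs (g i)) (s - 2))); cbv beta in Hdual.
    set (gs := fun i => pw (Rabs (g i)) s).
    rewrite (sumto_ext n (fun i => g i * _) gs), (sumto_ext n (fun i => pw (Rabs _) _) gs)
      in Hdual by (intros i _; apply (pw_abs_extremal (g i) s Hs)).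
    apply Hdual. intros i ->; ring. }
  destruct (Req_EM_T Sg 0) as [HSg0|HSg0]; [rewrite HSg0; apply pw_ge0|].
  assert (HSgp : 0 < pw Sg (1 / (s / (s - 1)))) by (apply pw_gt0; lra).
  assert (Hroot : pw Sg (1 / s) <= C).
  { apply (Rmult_le_reg_r _ _ _ HSgp).
    rewrite <- pw_plus. replace (1 / s + 1 / (s / (s - 1))) with 1 by (field; lra).
    now rewrite pw_1. }
  replace Sg with (pw (pw Sg (1 / s)) s) at 1
    by (rewrite pw_pw by lra; replace (1 / s * s) with 1 by (field; lra); now apply pw_1).
  apply pw_le; [lra | split; [apply pw_ge0 | exact Hroot]].
Qed.

Lemma Series_ge0 u : ex_series u -> (forall k, 0 <= u k) -> 0 <= Series u.
Proof.
  intros Hu Hpos. rewrite <- (Rmult_0_l (Series u)), <- Series_scal_l.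
  apply Series_le; [intros k; specialize (Hpos k); lra | exact Hu].
Qed.

Lemma sumto_le_Series u N : ex_series u -> (forall k, 0 <= u k) -> sumto N u <= Series u.
Proof.
  intros Hu Hpos. destruct N as [|N]; [now apply Series_ge0|].
  rewrite (Series_incr_n u (S N)), sumto_sum_f_R0 by (exact Hu || lia).
  assert (0 <= Series (fun k => u (S N + k)%nat))
    by (apply Series_ge0; [now apply ex_series_incr_n | auto]).
  change (Init.Nat.pred (S N)) with N. lra.
Qed.

Lemma ex_series_sumto_bounded u B :
  (forall k, 0 <= u k) -> (forall N, sumto N u <= B) -> ex_series u.
Proof.
  intros Hpos HB. apply ex_series_Reals_1, growing_cv.
  - intros n. simpl. pose proof (Hpos (S n)). lra.
  - exists B. intros x [N ->]. rewrite <- sumto_sum_f_R0. apply HB.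
Qed.

Lemma ex_series_eventually_zero u N : (forall k, (N <= k)%nat -> u k = 0) -> ex_series u.
Proof.
  intros Hu. apply (ex_series_incr_n u N).
  apply (ex_series_ext (fun k => 0 * (/ 2) ^ k)); [intros k; rewrite Hu by lia; apply Rmult_0_l|].
  apply (ex_series_scal_l (V := R_NormedModule)), ex_series_geom. rewrite Rabs_pos_eq; lra.
Qed.

Lemma in_lp_eventually_zero p y N : (forall k, (N <= k)%nat -> y k = 0) -> in_lp (Finite p) y.
Proof.
  intros Hy. apply (ex_series_eventually_zero _ N).
  intros k Hk. now rewrite Hy, Rabs_R0, pw_0.
Qed.

Lemma in_lp_unitv p j : in_lp (Finite p) (unitv j).
Proof.
  apply (in_lp_eventually_zero _ _ (S j)). intros k Hk. unfold unitv.
  now replace (Nat.eqb k j) with false by (symmetry; apply Nat.eqb_neq; lia).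
Qed.

Lemma in_lp_restrict p x y :
  in_lp (Finite p) x -> (forall k, y k = x k \/ y k = 0) -> in_lp (Finite p) y.
Proof.
  intros Hx Hy. refine (@ex_series_le R_AbsRing R_CompleteNormedModule _ _ _ Hx).
  intros k. change norm with Rabs. rewrite Rabs_pos_eq by apply pw_ge0.
  destruct (Hy k) as [-> | ->]; [lra|]. rewrite Rabs_R0, pw_0. apply pw_ge0.
Qed.

Lemma Rabs_le_lp_norm q y n : 0 < q -> in_lp (Finite q) y -> Rabs (y n) <= lp_norm q y.
Proof.
  intros Hq Hy. unfold lp_norm.
  rewrite <- (pw_pw_inv (Rabs (y n)) q) by (apply Rabs_pos || lra).
  apply pw_le; [apply Rdiv_lt_0_compat; lra|]. split; [apply pw_ge0|].
  apply Rle_trans with (sumto (S n) (fun k => pw (Rabs (y k)) q)).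
  - apply (sumto_term_le (S n) (fun k => pw (Rabs (y k)) q)); [intros; apply pw_ge0 | lia].
  - apply sumto_le_Series; [exact Hy | intros; apply pw_ge0].
Qed.

Definition truncv (N : nat) (x : nat -> R) : nat -> R := fun k => if Nat.ltb k N then x k else 0.
Definition tailv (N : nat) (x : nat -> R) : nat -> R := fun k => if Nat.ltb k N then 0 else x k.

Lemma lp_norm_tailv_small p x : 0 < p -> in_lp (Finite p) x ->
  forall e, 0 < e -> forall N0, exists N, (N0 <= N)%nat /\ lp_norm p (tailv N x) < e.
Proof.
  intros Hp Hx e He N0. set (u := fun k => pw (Rabs (x k)) p).
  destruct (ex_series_Reals_0 u Hx) as [l Hl].
  assert (Hepos : 0 < pw e p) by (apply pw_gt0; exact He).
  destruct (Hl _ Hepos) as [N1 HN1].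
  set (N := S (N0 + N1)). exists N. split; [unfold N; lia|].
  assert (Htail : Series (fun k => pw (Rabs (tailv N x k)) p) = Series (fun k => u (N + k)%nat)).
  { rewrite (Series_incr_n_aux _ N).
    - apply Series_ext. intros k. unfold tailv, u.
      now replace (Nat.ltb (N + k) N) with false by (symmetry; apply Nat.ltb_ge; lia).
    - intros k Hk. unfold tailv.
      replace (Nat.ltb k N) with true by (symmetry; now apply Nat.ltb_lt).
      now rewrite Rabs_R0, pw_0. }
  assert (Hsplit := Series_incr_n u N ltac:(unfold N; lia) Hx).
  replace (Series u) with l in Hsplit
    by (symmetry; apply is_series_unique, is_series_Reals, Hl).
  specialize (HN1 (N0 + N1)%nat ltac:(lia)). unfold R_dist in HN1. apply Rabs_def2 in HN1.
  unfold lp_norm. rewrite Htail.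
  rewrite <- (pw_pw_inv e p) by lra.
  apply pw_lt; [apply Rdiv_lt_0_compat; lra|]. split.
  - apply Series_ge0; [now apply ex_series_incr_n | intros; apply pw_ge0].
  - unfold N in Hsplit at 1. simpl Init.Nat.pred in Hsplit. lra.
Qed.

(** * Operators with a Cesàro factorisation *)

Definition cesaro_form (h g : nat -> R) (a : nat -> nat -> R) : Prop :=
  forall i j, a i j = (if Nat.leb j i then g i * h j / INR (S i) else 0).

Lemma cesaro_form_row_sum h g a i m rho : cesaro_form h g a ->
  sumto m (fun j => rho j * a i j)
  = g i / INR (S i) * sumto (Nat.min (S i) m) (fun j => h j * rho j).
Proof.
  intros Ha. rewrite <- sumto_scal, <- sumto_lower_triangular.
  apply sumto_ext; intros j _. rewrite Ha. destruct (Nat.leb j i); unfold Rdiv; ring.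
Qed.

Section BoundedOperator.

Variables (p q : R) (T : (nat -> R) -> nat -> R).
Hypotheses (p_gt0 : 0 < p) (q_gt0 : 0 < q) (T_bounded : bounded_linear_op p q T).

Lemma op_zero n : T (fun _ => 0) n = 0.
Proof.
  pose proof T_bounded as (_ & _ & T_scal & _).
  assert (H0 := T_scal 0 (fun _ => 0) (in_lp_eventually_zero p _ 0 (fun _ _ => eq_refl)) n).
  rewrite Rmult_0_l in H0. replace (fun _ : nat => 0 * 0) with (fun _ : nat => 0) in H0
    by (extensionality k; ring). exact H0.
Qed.

Lemma op_truncv x N n : T (truncv N x) n = sumto N (fun j => x j * T (unitv j) n).
Proof.
  pose proof T_bounded as (_ & T_add & T_scal & _).
  induction N as [|N IH]; simpl.
  - rewrite <- (op_zero n). reflexivity.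
  - assert (Hstep : truncv (S N) x = fun k => truncv N x k + x N * unitv N k).
    { extensionality k. unfold truncv, unitv.
      destruct (Nat.ltb_spec k (S N)), (Nat.ltb_spec k N), (Nat.eqb_spec k N);
        subst; try ring; lia. }
    rewrite Hstep, T_add, IH, T_scal by
      (apply in_lp_unitv || apply (in_lp_eventually_zero _ _ (S N));
       intros k Hk; unfold truncv, unitv;
       replace (Nat.ltb k N) with false by (symmetry; apply Nat.ltb_ge; lia);
       replace (Nat.eqb k N) with false by (symmetry; apply Nat.eqb_neq; lia); ring).
    reflexivity.
Qed.

Lemma op_truncv_tailv x N n :
  in_lp (Finite p) x -> T x n = T (truncv N x) n + T (tailv N x) n.
Proof.
  intros Hx. pose proof T_bounded as (_ & T_add & _ & _).
  rewrite <- T_add; [f_equal | apply (in_lp_restrict _ x) ..]; try exact Hx.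
  - extensionality k. unfold truncv, tailv. destruct (Nat.ltb k N); ring.
  - intros k. unfold truncv. destruct (Nat.ltb k N); auto.
  - intros k. unfold tailv. destruct (Nat.ltb k N); auto.
Qed.

Variable h : nat -> R.

Lemma cesaro_factor_iff_cesaro_form g :
  (forall x, in_lp (Finite p) x -> forall n, T x n = g n * cesaro (fun k => h k * x k) n)
  <-> cesaro_form h g (fun i j => T (unitv j) i).
Proof.
  split.
  - intros Hfac i j. rewrite Hfac by apply in_lp_unitv. unfold cesaro.
    rewrite sumto_unitv. cbn [Nat.ltb Nat.leb]. destruct (Nat.leb j i); unfold Rdiv; ring.
  - intros Hform x Hx n.
    set (c := g n * cesaro (fun k => h k * x k) n).
    assert (Htrunc : forall N, (n < N)%nat -> T (truncv N x) n = c).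
    { intros N HN. rewrite op_truncv, (cesaro_form_row_sum h g _ n N x Hform).
      replace (Nat.min (S n) N) with (S n) by lia.
      unfold c, cesaro, Rdiv; ring. }
    pose proof T_bounded as (T_lp & _ & _ & [M HM]).
    (* [T x n - c = T (tailv N x) n] for every [N > n], and these tails tend to 0 in l^p. *)
    assert (Htail : forall N, (n < N)%nat ->
              Rabs (T x n - c) <= Rabs M * lp_norm p (tailv N x)).
    { intros N HN.
      assert (Htl : in_lp (Finite p) (tailv N x)).
      { apply (in_lp_restrict _ x _ Hx). intros k. unfold tailv. destruct (Nat.ltb k N); auto. }
      rewrite (op_truncv_tailv x N n Hx), Htrunc by exact HN.
      replace (c + T (tailv N x) n - c) with (T (tailv N x) n) by ring.
      apply Rle_trans with (lp_norm q (T (tailv N x)));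
        [apply Rabs_le_lp_norm; [exact q_gt0 | now apply T_lp]|].
      eapply Rle_trans; [apply HM, Htl|].
      apply Rmult_le_compat_r; [unfold lp_norm; apply pw_ge0 | apply Rle_abs]. }
    destruct (Req_EM_T (T x n - c) 0) as [Hd|Hd]; [lra | exfalso].
    set (d := Rabs (T x n - c)). assert (Hdpos : 0 < d) by (apply Rabs_pos_lt, Hd).
    assert (HM1 : 0 < Rabs M + 1) by (pose proof (Rabs_pos M); lra).
    destruct (lp_norm_tailv_small p x p_gt0 Hx (d / (Rabs M + 1))
                (Rdiv_lt_0_compat _ _ Hdpos HM1) (S n)) as [N [HN Hsmall]].
    specialize (Htail N HN). fold d in Htail.
    assert (Rabs M * lp_norm p (tailv N x) <= Rabs M * (d / (Rabs M + 1)))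
      by (apply Rmult_le_compat_l; [apply Rabs_pos | lra]).
    assert (Rabs M * (d / (Rabs M + 1)) < d)
      by (apply (Rmult_lt_reg_r (Rabs M + 1)); [lra|]; field_simplify; lra).
    lra.
Qed.

End BoundedOperator.

(** * The test inequalities *)

Definition row_test_bound (a : nat -> nat -> R) (h : nat -> R) (C : R) : Prop :=
  forall (n m : nat) (rr : nat -> R), (forall j, Rabs (rr j) <= 1) ->
    sumto m (fun j => rr j * a n j)
    <= C * (1 / INR (S n)) * Rabs (sumto (Nat.min (S n) m) (fun j => h j * rr j)).

Definition test_sum (a : nat -> nat -> R) (n m : nat) (rr : nat -> nat -> R) : R :=
  sumto n (fun i => sumto m (fun j => rr i j * a i j)).

Definition test_norm (h : nat -> R) (s' : R) (n m : nat) (rr : nat -> nat -> R) : R :=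
  pw (sumto n (fun i => / pw (INR (S i)) s' *
        pw (Rabs (sumto (Nat.min (S i) m) (fun j => h j * rr i j))) s')) (1 / s').

Definition weighted_test_bound (a : nat -> nat -> R) (h : nat -> R) (s' C : R) : Prop :=
  forall (n m : nat) (rr : nat -> nat -> R), (forall i j, Rabs (rr i j) <= 1) ->
    test_sum a n m rr <= C * test_norm h s' n m rr.

Lemma test_norm_eq h s' n m rr :
  test_norm h s' n m rr
  = pw (sumto n (fun i =>
          pw (Rabs (sumto (Nat.min (S i) m) (fun j => h j * rr i j) / INR (S i))) s')) (1 / s').
Proof.
  unfold test_norm. f_equal. apply sumto_ext; intros i _.
  assert (Hi := INR_S_gt0 i).
  rewrite pw_div, Rabs_div, (Rabs_pos_eq (INR (S i))); auto using Rabs_pos; lra.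
Qed.

Lemma test_norm_1 h n m rr :
  test_norm h 1 n m rr
  = sumto n (fun i => Rabs (sumto (Nat.min (S i) m) (fun j => h j * rr i j)) / INR (S i)).
Proof.
  rewrite test_norm_eq. replace (1 / 1) with 1 by field.
  rewrite pw_1 by (apply sumto_ge0; intros; apply pw_ge0).
  apply sumto_ext; intros i _.
  assert (Hi := INR_S_gt0 i).
  rewrite pw_1, Rabs_div, (Rabs_pos_eq (INR (S i))); try lra.
  apply Rabs_pos.
Qed.

Lemma test_norm_ext h s' n m rr rr' :
  (forall i j, (i < n)%nat -> (j < m)%nat -> rr i j = rr' i j) ->
  test_norm h s' n m rr = test_norm h s' n m rr'.
Proof.
  intros Hrr. unfold test_norm. f_equal. apply sumto_ext; intros i Hi.
  do 3 f_equal. apply sumto_ext; intros j Hj. rewrite Hrr by lia. reflexivity.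
Qed.

Lemma test_norm_scal h s' n m rr c : 0 < s' -> 0 < c ->
  test_norm h s' n m (fun i j => c * rr i j) = c * test_norm h s' n m rr.
Proof.
  intros Hs' Hc. unfold test_norm.
  rewrite (sumto_ext n _ (fun i => pw c s' * (/ pw (INR (S i)) s'
             * pw (Rabs (sumto (Nat.min (S i) m) (fun j => h j * rr i j))) s'))).
  - assert (Hterm : forall i, 0 <= / pw (INR (S i)) s'
               * pw (Rabs (sumto (Nat.min (S i) m) (fun j => h j * rr i j))) s').
    { intros i. apply Rmult_le_pos; [|apply pw_ge0].
      left; apply Rinv_0_lt_compat, pw_gt0, INR_S_gt0. }
    rewrite sumto_scal, pw_mult, pw_pw_inv;
      try apply pw_ge0; try apply sumto_ge0; auto; lra.
  - intros i _.
    rewrite (sumto_ext _ _ (fun j => c * (h j * rr i j))) by (intros; ring).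
    rewrite sumto_scal, Rabs_mult, (Rabs_pos_eq c), pw_mult by (auto using Rabs_pos; lra).
    ring.
Qed.

Lemma test_sum_ext a n m rr rr' :
  (forall i j, (i < n)%nat -> (j < m)%nat -> rr i j = rr' i j) ->
  test_sum a n m rr = test_sum a n m rr'.
Proof.
  intros Hrr. apply sumto_ext; intros i Hi. apply sumto_ext; intros j Hj. now rewrite Hrr.
Qed.

Lemma test_sum_scal a n m rr c :
  test_sum a n m (fun i j => c * rr i j) = c * test_sum a n m rr.
Proof.
  unfold test_sum. rewrite <- sumto_scal. apply sumto_ext; intros i _.
  rewrite <- sumto_scal. apply sumto_ext; intros j _. ring.
Qed.

(* Both sides are positively homogeneous in [rr] and only see the block [i < n], [j < m]. *)
Lemma weighted_test_bound_all a h s' C : 0 < s' ->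
  weighted_test_bound a h s' C -> forall n m rr, test_sum a n m rr <= C * test_norm h s' n m rr.
Proof.
  intros Hs' Hbound n m rr.
  set (B := 1 + sumto n (fun i => sumto m (fun j => Rabs (rr i j)))).
  assert (HB : forall i j, (i < n)%nat -> (j < m)%nat -> Rabs (rr i j) < B).
  { intros i j Hi Hj.
    assert (Rabs (rr i j) <= sumto m (fun j => Rabs (rr i j)))
      by (apply (sumto_term_le m (fun j => Rabs (rr i j))); auto using Rabs_pos).
    assert (sumto m (fun j => Rabs (rr i j)) <= sumto n (fun i => sumto m (fun j => Rabs (rr i j))))
      by (apply (sumto_term_le n (fun i => sumto m (fun j => Rabs (rr i j)))); auto;
          intros; apply sumto_ge0; auto using Rabs_pos).
    unfold B; lra. }
  assert (HB0 : 0 < B).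
  { assert (0 <= sumto n (fun i => sumto m (fun j => Rabs (rr i j))))
      by (apply sumto_ge0; intros; apply sumto_ge0; intros; apply Rabs_pos).
    unfold B; lra. }
  set (rr' := fun i j => if andb (Nat.ltb i n) (Nat.ltb j m) then / B * rr i j else 0).
  assert (Hblock : forall i j, (i < n)%nat -> (j < m)%nat -> rr' i j = / B * rr i j).
  { intros i j Hi Hj. unfold rr'. apply Nat.ltb_lt in Hi, Hj. now rewrite Hi, Hj. }
  assert (Hunit : forall i j, Rabs (rr' i j) <= 1).
  { intros i j. unfold rr'.
    destruct (Nat.ltb_spec i n), (Nat.ltb_spec j m); simpl; try (rewrite Rabs_R0; lra).
    rewrite Rabs_mult, Rabs_inv, Rabs_pos_eq by lra.
    apply (Rmult_le_reg_l B); [exact HB0|]. field_simplify; [|lra].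
    specialize (HB i j ltac:(assumption) ltac:(assumption)). lra. }
  specialize (Hbound n m rr' Hunit).
  rewrite (test_sum_ext a n m rr' (fun i j => / B * rr i j)), test_sum_scal,
    (test_norm_ext h s' n m rr' (fun i j => / B * rr i j)), test_norm_scal in Hbound
    by (auto; apply Rinv_0_lt_compat, HB0).
  apply (Rmult_le_reg_l (/ B)); [now apply Rinv_0_lt_compat|]. lra.
Qed.

Lemma row_ineq_of_weighted_test_bound a h s' C : 0 < s' ->
  weighted_test_bound a h s' C -> forall i m rho,
  sumto m (fun j => rho j * a i j)
  <= C * (1 / INR (S i)) * Rabs (sumto (Nat.min (S i) m) (fun j => h j * rho j)).
Proof.
  intros Hs' Hbound i m rho.
  set (X := sumto (Nat.min (S i) m) (fun j => h j * rho j)).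
  assert (Hrow := weighted_test_bound_all a h s' C Hs' Hbound (S i) m
                    (fun i' j => if Nat.eqb i' i then rho j else 0)).
  unfold test_sum in Hrow. rewrite test_norm_eq in Hrow.
  rewrite !(sumto_only (S i) _ i), Nat.eqb_refl, pw_pw_inv in Hrow; try lia.
  - fold X in Hrow. replace (C * (1 / INR (S i)) * Rabs X) with (C * (Rabs (X / INR (S i))));
      [exact Hrow|].
    assert (Hi := INR_S_gt0 i). rewrite Rabs_div, (Rabs_pos_eq (INR (S i))) by lra.
    field; lra.
  - apply Rabs_pos.
  - lra.
  - intros k _ Hk. apply Nat.eqb_neq in Hk. rewrite Hk.
    rewrite sumto_eq0 by (intros; ring). unfold Rdiv. rewrite Rmult_0_l, Rabs_R0. apply pw_0.
  - intros k _ Hk. apply Nat.eqb_neq in Hk. rewrite Hk. apply sumto_eq0; intros; ring.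
Qed.

Definition sqsum (h : nat -> R) (i : nat) : R := sumto (S i) (fun k => h k * h k).

(* [i+1] times the coefficient of the projection of row [i] onto [h] restricted to [0..i]. *)
Definition row_coef (a : nat -> nat -> R) (h : nat -> R) (i : nat) : R :=
  if Req_EM_T (sqsum h i) 0 then 0
  else INR (S i) * sumto (S i) (fun k => h k * a i k) / sqsum h i.

Lemma sqsum_ge0 h i : 0 <= sqsum h i.
Proof. apply sumto_ge0; intros; apply Rle_0_sqr. Qed.

Section RowCoefficients.

Variables (a : nat -> nat -> R) (h : nat -> R) (C : R).
Hypothesis row_ineq : forall i m rho,
  sumto m (fun j => rho j * a i j)
  <= C * (1 / INR (S i)) * Rabs (sumto (Nat.min (S i) m) (fun j => h j * rho j)).

Lemma row_annihilated i m rho :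
  sumto (Nat.min (S i) m) (fun j => h j * rho j) = 0 -> sumto m (fun j => rho j * a i j) = 0.
Proof.
  intros Hrho.
  assert (Hle := row_ineq i m rho). assert (Hge := row_ineq i m (fun j => - rho j)).
  rewrite (sumto_ext _ (fun j => - rho j * a i j) (fun j => -1 * (rho j * a i j))),
    (sumto_ext _ (fun j => h j * - rho j) (fun j => -1 * (h j * rho j))), !sumto_scal in Hge
    by (intros; ring).
  rewrite Hrho, Rabs_R0, Rmult_0_r in Hle.
  rewrite Hrho, Rmult_0_r, Rabs_R0, Rmult_0_r in Hge. lra.
Qed.

Lemma row_entry_eq0 i j : ((j <= i)%nat -> h j = 0) -> a i j = 0.
Proof.
  intros Hj. replace (a i j) with (sumto (S j) (fun k => unitv j k * a i k)).
  - apply row_annihilated.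
    rewrite sumto_unitv. destruct (Nat.ltb_spec j (Nat.min (S i) (S j))); [|reflexivity].
    apply Hj; lia.
  - rewrite (sumto_ext _ _ (fun k => a i k * unitv j k)) by (intros; ring).
    rewrite sumto_unitv.
    now replace (Nat.ltb j (S j)) with true by (symmetry; apply Nat.ltb_lt; lia).
Qed.

(* Test the row against [sqsum h i * e_j - h j * h], which is orthogonal to [h] on [0..i]. *)
Lemma row_entry_cross i j : (j <= i)%nat ->
  sqsum h i * a i j = h j * sumto (S i) (fun k => h k * a i k).
Proof.
  intros Hj. set (rho := fun k => sqsum h i * unitv j k - h j * h k).
  assert (Hsplit : forall f, sumto (S i) (fun k => f k * rho k)
                     = sqsum h i * f j - h j * sumto (S i) (fun k => f k * h k)).
  { intros f. unfold rho.
    rewrite (sumto_ext _ _ (fun k => sqsum h i * (f k * unitv j k) + - h j * (f k * h k)))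
      by (intros; ring).
    rewrite sumto_plus, !sumto_scal, sumto_unitv.
    replace (Nat.ltb j (S i)) with true by (symmetry; apply Nat.ltb_lt; lia). ring. }
  assert (Hzero := row_annihilated i (S i) rho).
  rewrite Nat.min_id, (sumto_ext _ (fun k => rho k * a i k) (fun k => a i k * rho k)), Hsplit
    in Hzero by (intros; ring).
  rewrite Hsplit in Hzero. unfold sqsum in *.
  rewrite (sumto_ext _ (fun k => a i k * h k) (fun k => h k * a i k)) in Hzero
    by (intros; ring).
  apply Rminus_diag_uniq, Hzero. ring.
Qed.

Lemma cesaro_form_row_coef : cesaro_form h (row_coef a h) a.
Proof.
  intros i j. destruct (Nat.leb_spec j i) as [Hj|Hj].
  - unfold row_coef. destruct (Req_EM_T (sqsum h i) 0) as [Hsq|Hsq].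
    + unfold Rdiv. rewrite !Rmult_0_l. apply row_entry_eq0. intros Hji.
      assert (Hhj := sumto_ge0_eq0 (S i) (fun k => h k * h k)
                       (fun k _ => Rle_0_sqr (h k)) Hsq j ltac:(lia)).
      simpl in Hhj. nra.
    + apply (Rmult_eq_reg_l (sqsum h i)); [|exact Hsq].
      rewrite row_entry_cross by exact Hj.
      field; split; [exact Hsq | apply Rgt_not_eq, INR_S_gt0].
  - apply row_entry_eq0. lia.
Qed.

(* Test the row against [row_coef a h i * h]. *)
Lemma row_coef_le : 0 <= C -> forall i, Rabs (row_coef a h i) <= C.
Proof.
  intros HC i. set (g := row_coef a h i).
  destruct (Req_EM_T (sqsum h i) 0) as [Hsq|Hsq].
  { unfold g, row_coef. destruct (Req_EM_T (sqsum h i) 0); [|contradiction].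
    rewrite Rabs_R0; exact HC. }
  assert (HD : 0 < sqsum h i) by (pose proof (sqsum_ge0 h i); lra).
  assert (Hi := INR_S_gt0 i).
  assert (Hrow := row_ineq i (S i) (fun j => g * h j)).
  rewrite (cesaro_form_row_sum h (row_coef a h) a i (S i) _ cesaro_form_row_coef) in Hrow.
  fold g in Hrow. rewrite Nat.min_id in Hrow.
  rewrite (sumto_ext _ _ (fun j => g * (h j * h j))), sumto_scal in Hrow by (intros; ring).
  fold (sqsum h i) in Hrow.
  rewrite Rabs_mult, (Rabs_pos_eq (sqsum h i)) in Hrow by lra.
  assert (Hsq_g : g * g <= C * Rabs g).
  { apply (Rmult_le_reg_r (sqsum h i / INR (S i))); [apply Rdiv_lt_0_compat; lra|].
    replace (g * g * (sqsum h i / INR (S i))) with (g / INR (S i) * (g * sqsum h i))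
      by (field; lra).
    eapply Rle_trans; [exact Hrow | right; field; lra]. }
  replace (g * g) with (Rabs g * Rabs g) in Hsq_g
    by (rewrite <- Rabs_mult; apply Rabs_pos_eq, Rle_0_sqr).
  pose proof (Rabs_pos g). nra.
Qed.

End RowCoefficients.

(* Testing row [i] against [rr i j = y i * (i+1) / sqsum h i * h j] turns the weighted
   test into a pairing of [row_coef a h] with an arbitrary [y]. *)
Lemma row_coef_dual a h s' C : 0 < s' -> weighted_test_bound a h s' C ->
  forall n y, (forall i, row_coef a h i = 0 -> y i = 0) ->
  sumto n (fun i => row_coef a h i * y i)
  <= C * pw (sumto n (fun i => pw (Rabs (y i)) s')) (1 / s').
Proof.
  intros Hs' Hbound n y Hy.
  assert (Hform := cesaro_form_row_coef a h C
                     (row_ineq_of_weighted_test_bound a h s' C Hs' Hbound)).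
  set (rr := fun i j => if Req_EM_T (sqsum h i) 0 then 0 else y i * INR (S i) / sqsum h i * h j).
  assert (HX : forall i, (i < n)%nat ->
            sumto (Nat.min (S i) n) (fun j => h j * rr i j) = y i * INR (S i)).
  { intros i Hi. replace (Nat.min (S i) n) with (S i) by lia. unfold rr.
    destruct (Req_EM_T (sqsum h i) 0) as [Hsq|Hsq].
    - rewrite Hy by (unfold row_coef; destruct (Req_EM_T (sqsum h i) 0); easy).
      rewrite Rmult_0_l. apply sumto_eq0; intros; ring.
    - rewrite (sumto_ext _ _ (fun j => y i * INR (S i) / sqsum h i * (h j * h j)))
        by (intros; ring).
      rewrite sumto_scal. fold (sqsum h i). field. exact Hsq. }
  assert (Hineq := weighted_test_bound_all a h s' C Hs' Hbound n n rr).
  unfold test_sum in Hineq. rewrite test_norm_eq in Hineq.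
  assert (Hi := INR_S_gt0).
  rewrite (sumto_ext n (fun i => sumto n _) (fun i => row_coef a h i * y i)),
    (sumto_ext n (fun i => pw (Rabs (_ / _)) s') (fun i => pw (Rabs (y i)) s')) in Hineq.
  - exact Hineq.
  - intros i Hi'. rewrite HX by exact Hi'. do 2 f_equal. field. apply Rgt_not_eq, Hi.
  - intros i Hi'.
    rewrite (cesaro_form_row_sum h (row_coef a h) a i n (rr i) Hform), HX by exact Hi'.
    field. apply Rgt_not_eq, Hi.
Qed.

Lemma row_coef_lp a h s C : 1 < s -> weighted_test_bound a h (s / (s - 1)) C ->
  ex_series (fun i => pw (Rabs (row_coef a h i)) s).
Proof.
  intros Hs Hbound. apply (ex_series_sumto_bounded _ (pw C s)); [intros; apply pw_ge0|].
  intros N. apply sumto_pw_le_of_dual; [exact Hs|].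
  apply row_coef_dual; [apply Rdiv_lt_0_compat; lra | exact Hbound].
Qed.

Lemma row_test_bound_of_cesaro_form a h g M :
  cesaro_form h g a -> (forall i, Rabs (g i) <= M) -> row_test_bound a h M.
Proof.
  intros Hform HM n m rr _. rewrite (cesaro_form_row_sum h g a n m rr Hform).
  assert (Hn := INR_S_gt0 n).
  eapply Rle_trans; [apply Rle_abs|].
  rewrite Rabs_mult, Rabs_div, (Rabs_pos_eq (INR (S n))) by lra.
  unfold Rdiv. rewrite Rmult_1_l.
  apply Rmult_le_compat_r; [apply Rabs_pos|].
  apply Rmult_le_compat_r; [left; now apply Rinv_0_lt_compat | apply HM].
Qed.

Lemma weighted_test_bound_of_row_test_bound a h C :
  row_test_bound a h C -> weighted_test_bound a h 1 C.
Proof.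
  intros Hrow n m rr Hrr. unfold test_sum. rewrite test_norm_1, <- sumto_scal.
  apply sumto_le; intros i _.
  eapply Rle_trans; [apply Hrow; intros j; apply Hrr | right; unfold Rdiv; ring].
Qed.

Lemma weighted_test_bound_of_cesaro_form a h g s : 1 < s ->
  cesaro_form h g a -> ex_series (fun i => pw (Rabs (g i)) s) ->
  exists C, 0 < C /\ weighted_test_bound a h (s / (s - 1)) C.
Proof.
  intros Hs Hform Hg. set (G := pw (Series (fun i => pw (Rabs (g i)) s)) (1 / s)).
  assert (HG : 0 <= G) by apply pw_ge0.
  exists (G + 1). split; [lra|].
  intros n m rr _. unfold test_sum. rewrite test_norm_eq.
  rewrite (sumto_ext n _
             (fun i => g i * (sumto (Nat.min (S i) m) (fun j => h j * rr i j) / INR (S i))))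
    by (intros i _; rewrite (cesaro_form_row_sum h g a i m (rr i) Hform); unfold Rdiv; ring).
  eapply Rle_trans; [apply sumto_holder; exact Hs|].
  apply Rmult_le_compat_r; [apply pw_ge0|].
  assert (pw (sumto n (fun i => pw (Rabs (g i)) s)) (1 / s) <= G).
  { apply pw_le; [apply Rdiv_lt_0_compat; lra|]. split.
    - apply sumto_ge0; intros; apply pw_ge0.
    - apply sumto_le_Series; [exact Hg | intros; apply pw_ge0]. }
  lra.
Qed.

Lemma bounded_cesaro_form_of_weighted_test_bound a h s' C : 0 < s' -> 0 < C ->
  weighted_test_bound a h s' C -> exists g, in_lp p_infty g /\ cesaro_form h g a.
Proof.
  intros Hs' HC Hbound. assert (Hrow := row_ineq_of_weighted_test_bound a h s' C Hs' Hbound).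
  exists (row_coef a h). split.
  - exists C. apply row_coef_le; [exact Hrow | lra].
  - exact (cesaro_form_row_coef a h C Hrow).
Qed.

Lemma bounded_cesaro_form_iff_row_test_bound a h :
  (exists g, in_lp p_infty g /\ cesaro_form h g a) <-> (exists C, 0 < C /\ row_test_bound a h C).
Proof.
  split.
  - intros [g [[M HM] Hform]]. exists (M + 1). split.
    + pose proof (HM 0%nat). pose proof (Rabs_pos (g 0%nat)). lra.
    + apply (row_test_bound_of_cesaro_form a h g); [exact Hform|].
      intros i. specialize (HM i). lra.
  - intros [C [HC Hrow]].
    apply (bounded_cesaro_form_of_weighted_test_bound a h 1 C); [lra | exact HC |].
    now apply weighted_test_bound_of_row_test_bound.
Qed.

Lemma bounded_cesaro_form_iff_weighted_test_bound a h :
  (exists g, in_lp p_infty g /\ cesaro_form h g a)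
  <-> (exists C, 0 < C /\ weighted_test_bound a h 1 C).
Proof.
  rewrite bounded_cesaro_form_iff_row_test_bound. split.
  - intros [C [HC Hrow]]. exists C. split; [exact HC|].
    now apply weighted_test_bound_of_row_test_bound.
  - intros [C [HC Hbound]]. apply bounded_cesaro_form_iff_row_test_bound.
    apply (bounded_cesaro_form_of_weighted_test_bound a h 1 C); [lra | exact HC | exact Hbound].
Qed.

Lemma lp_cesaro_form_iff_weighted_test_bound a h s : 1 < s ->
  (exists g, in_lp (Finite s) g /\ cesaro_form h g a)
  <-> (exists C, 0 < C /\ weighted_test_bound a h (s / (s - 1)) C).
Proof.
  intros Hs. split.
  - intros [g [Hg Hform]]. now apply (weighted_test_bound_of_cesaro_form a h g s).
  - intros [C [HC Hbound]]. exists (row_coef a h). split.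
    + exact (row_coef_lp a h s C Hs Hbound).
    + apply (cesaro_form_row_coef a h C), (row_ineq_of_weighted_test_bound a h (s / (s - 1)));
        [apply Rdiv_lt_0_compat; lra | exact Hbound].
Qed.

Theorem proposition5p3 (p q r : R) (T : (nat -> R) -> (nat -> R)) (h : nat -> R) :
  1 <= p -> 1 < q -> 1 < r ->
  bounded_linear_op p q T -> nontrivial_op p T ->
  in_lp (s_exp p r) h ->
  let a := fun i j => T (unitv j) i in
  let s := s_exp r q in
  let s' := conj_exp s in
  let Pa := exists g, in_lp s g /\
              forall x, in_lp (Finite p) x ->
                forall n, T x n = g n * cesaro (fun k => h k * x k) n in
  let Pb := exists g, in_lp s g /\
              forall i j, a i j = (if Nat.leb j i then g i * h j / INR (S i) else 0) in
  let Pc := exists C, 0 < C /\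
              forall (n m : nat) (rr : nat -> nat -> R),
                (forall i j, Rabs (rr i j) <= 1) ->
                sumto n (fun i => sumto m (fun j => rr i j * a i j))
                <= C * pw (sumto n (fun i =>
                         / pw (INR (S i)) s' *
                         pw (Rabs (sumto (Nat.min (S i) m) (fun j => h j * rr i j))) s'))
                        (1 / s') in
  let Pd := exists C, 0 < C /\
              forall (n m : nat) (rr : nat -> R),
                (forall j, Rabs (rr j) <= 1) ->
                sumto m (fun j => rr j * a n j)
                <= C * (1 / INR (S n)) * Rabs (sumto (Nat.min (S n) m) (fun j => h j * rr j)) in
  (Pa <-> Pb) /\ (Pb <-> Pc) /\ (r <= q -> (Pc <-> Pd)).
Proof.
  intros Hp Hq Hr HT _ _ a s s' Pa Pb Pc Pd.
  split; [|split].
  - split; intros [g [Hg Hfac]]; exists g; split; try exact Hg;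
      now apply (cesaro_factor_iff_cesaro_form p q T ltac:(lra) ltac:(lra) HT h g).
  - subst Pb Pc s' s. unfold s_exp. destruct (Rlt_dec q r) as [Hqr|Hqr]; cbn [conj_exp].
    + apply (lp_cesaro_form_iff_weighted_test_bound a h).
      apply (Rmult_lt_reg_r (r - q)); [lra|]. field_simplify; nra.
    + exact (bounded_cesaro_form_iff_weighted_test_bound a h).
  - intros Hrq. subst Pb Pc Pd s' s. unfold s_exp.
    destruct (Rlt_dec q r) as [Hqr|_]; [lra|]. cbn [conj_exp].
    rewrite <- (bounded_cesaro_form_iff_weighted_test_bound a h).
    apply (bounded_cesaro_form_iff_row_test_bound a h).
Qed.
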